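(* Let $s,c\ge 1$ be integers, and suppose that every $s\mathcal{O}$-free graph $G$ with no cycle of length four has at most $|G|^{c}$ ordered induced paths. Then every $s\mathcal{O}$-free graph $G$ has at most $|G|^{d}$ ordered induced paths, where $d=2+(s-1)(c+6)$.
   Context: Graphs are finite and simple; $|G|$ denotes the number of vertices of $G$. Every path has at least one vertex. An ordered induced path is an induced path together with a choice of one of its ends as its first vertex. Two subsets $X,Y$ of $V(G)$ are anticomplete if they are disjoint and no edge joins them; two subgraphs are anticomplete if their vertex sets are. A graph is $s\mathcal{O}$-free if there do not exist $s$ cycles of it that are pairwise vertex-disjoint and pairwise anticomplete. *)

From mathcomp Require Import all_boot.
Set Implicit Arguments. Unset Strict Implicit. Unset Printing Implicit Defensive.

Definition simple_graph (T : finType) (e : rel T) : Prop :=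
  symmetric e /\ irreflexive e.

Definition is_cycle (T : finType) (e : rel T) (cy : seq T) : bool :=
  [&& 2 < size cy, uniq cy & cycle e cy].

Definition anticomplete (T : finType) (e : rel T) (A B : {set T}) : bool :=
  [disjoint A & B] && [forall x in A, forall y in B, ~~ e x y].

Definition sO_free (s : nat) (T : finType) (e : rel T) : Prop :=
  ~ exists f : 'I_s -> seq T,
      (forall i, is_cycle e (f i)) /\
      (forall i j, i != j -> anticomplete e [set x in f i] [set x in f j]).

Definition no_C4 (T : finType) (e : rel T) : Prop :=
  ~ exists cy : seq T, is_cycle e cy /\ size cy = 4.

Definition ordered_induced_path (T : finType) (e : rel T) (k : nat)
    (t : k.-tuple T) : bool :=
  [&& 0 < k, uniq t &
      [forall i : 'I_k, forall j : 'I_k,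
         e (tnth t i) (tnth t j) == ((i.+1 == j :> nat) || (j.+1 == i :> nat))]].

(* Number of ordered induced paths of G (a path has at most |G| vertices). *)
Definition num_ordered_induced_paths (T : finType) (e : rel T) : nat :=
  \sum_(k < #|T|.+1) #|[pred t : k.-tuple T | ordered_induced_path e t]|.

(* Induction on s, for the induced subgraphs G[S].  When s = 1, G[S] is a
   forest and an induced path is determined by its two ends.  Otherwise, if
   G[S] has no four-cycle the hypothesis applies directly.  If it has one, take
   an ordered induced path P and a four-cycle X of G[S] for which the longest
   final segment B of P avoiding the closed neighbourhood N[X] is as long as
   possible.  As G[S] - N[X] is (s-1)O-free, B is counted by induction.  If B
   is not all of P, let v be the vertex just before B: by the choice of X, the
   segment v :: B meets N[Y] for every four-cycle Y of G[S], so G[S] - N[v :: B]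
   has no four-cycle; the rest of P is an induced path A of that graph
   followed by one more vertex u.  Altogether P is determined by X, B, v, u
   and A, which gives at most |S|^4 * |S|^a * |S|^(c+2) choices, where
   a = 2 + (s-2)(c+6) is the exponent for (s-1)O-free graphs. *)

From mathcomp Require Import all_boot zify.
Set Implicit Arguments. Unset Strict Implicit. Unset Printing Implicit Defensive.

Section InducedPath.
Variables (T : eqType) (e : rel T).

Fixpoint induced_path (s : seq T) : bool :=
  if s is x :: s' then
    [&& x \notin s', induced_path s', all (e x) (take 1 s')
      & all (predC (e x)) (drop 1 s')]
  else true.

Lemma induced_path_uniq s : induced_path s -> uniq s.
Proof. by elim: s => //= x s IH /and4P[-> /IH ->]. Qed.

Lemma induced_path_path x s : induced_path (x :: s) -> path e x s.
Proof. by elim: s x => //= y s IH x /and4P[_ ys /andP[-> _] _]; apply: IH. Qed.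

Lemma induced_path_catr s1 s2 : induced_path (s1 ++ s2) -> induced_path s2.
Proof. by elim: s1 => //= x s1 IH /and4P[_ /IH]. Qed.

Lemma induced_path_catl s1 s2 : induced_path (s1 ++ s2) -> induced_path s1.
Proof.
elim: s1 => //= x s1 IH /and4P[xs /IH -> ex nex].
rewrite mem_cat negb_or in xs; case/andP: xs => -> _.
case: s1 {IH} ex nex => //= y s1 /andP[-> _] /=.
by rewrite !drop0 take0 all_cat => /andP[].
Qed.

Lemma induced_path_cat_nadj s1 u s2 x y : induced_path (s1 ++ u :: s2) ->
  x \in s1 -> y \in s2 -> (x != y) && ~~ e x y.
Proof.
elim: s1 => //= z s1 IH /and4P[zs ip _ nez]; rewrite inE => /predU1P[-> ys|xs1];
  last exact: IH.
apply/andP; split; first by apply: contraNneq zs => ->; rewrite mem_cat inE ys !orbT.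
apply: (allP nez); case: s1 {IH zs ip nez} => /=; first by rewrite drop0.
by move=> w s1; rewrite drop0 mem_cat inE ys !orbT.
Qed.

Lemma adj_only_head_nth x0 x s :
  all (e x) (take 1 s) && all (predC (e x)) (drop 1 s) <->
  (forall j, j < size s -> e x (nth x0 s j) = (j == 0)).
Proof.
case: s => [|y s] //=; rewrite take0 drop0 andbT; split.
  by case/andP=> exy /(all_nthP x0) nex [|j] //= /nex /negbTE.
move=> adj; rewrite (adj 0) //=; apply/(all_nthP x0) => j js.
by rewrite /= (adj j.+1).
Qed.

Hypotheses (e_sym : symmetric e) (e_irr : irreflexive e).

Lemma induced_pathP x0 s : induced_path s <->
  uniq s /\ forall i j, i < size s -> j < size s ->
    e (nth x0 s i) (nth x0 s j) = (i.+1 == j) || (j.+1 == i).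
Proof.
elim: s => [|x s IH] /=; first by split=> // _; split.
rewrite -(rwP and3P); split.
  case=> xs /IH[us adj] /(adj_only_head_nth x0) hd; split; first by rewrite xs.
  case=> [|i] [|j] ilt jlt; rewrite /= ?ltnS in ilt jlt *.
  - by rewrite /= e_irr.
  - by rewrite hd // orbF eqSS eq_sym.
  - by rewrite e_sym hd // eqSS; case: i {ilt}.
  - by rewrite adj // !eqSS.
case=> /andP[xs us] adj; split=> //.
  apply/IH; split=> // i j ilt jlt.
  by have := adj i.+1 j.+1; rewrite /= !ltnS !eqSS; apply.
apply/(adj_only_head_nth x0) => j js.
by have := adj 0 j.+1; rewrite /= ltnS eqSS orbF => ->.
Qed.

End InducedPath.

Fixpoint seqs_over (A : Type) (l : seq A) (k : nat) : seq (seq A) :=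
  if k is k'.+1 then [seq x :: s | x <- l, s <- seqs_over l k'] else [:: [::]].

Lemma size_seqs_over (A : Type) (l : seq A) k : size (seqs_over l k) = size l ^ k.
Proof. by elim: k => //= k IH; rewrite size_allpairs IH expnS. Qed.

Lemma mem_seqs_over (A : eqType) (l : seq A) k s :
  (s \in seqs_over l k) = (size s == k) && all (mem l) s.
Proof.
elim: k s => [|k IH] [|x s] //=; first by apply/negbTE/allpairsP => -[[y t] []].
rewrite eqSS; apply/allpairsP/and3P => [[[y t] /= [yl]] | [sz xl sl]].
  by rewrite IH => /andP[/eqP <- tl] [-> ->].
by exists (x, s); rewrite /= xl IH sz sl.
Qed.

Lemma sum_count_size (A : Type) (L : seq (seq A)) n : all (fun P => size P <= n) L ->
  \sum_(k < n.+1) count (fun P => size P == k) L = size L.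
Proof.
elim: L => [|P L IH] /=; first by rewrite big1.
case/andP=> Pn /IH {IH}; rewrite big_split /= => ->.
rewrite (bigD1 (Ordinal (Pn : size P < n.+1))) //= eqxx big1 // => k.
by rewrite -val_eqE /= eq_sym => /negbTE ->.
Qed.

Lemma size_le_card (T : finType) (S : {set T}) (P : seq T) :
  uniq P -> all (mem S) P -> size P <= #|S|.
Proof. by move=> uP /allP PS; rewrite cardE uniq_leq_size // => x /PS; rewrite mem_enum. Qed.

Section InducedPathCount.
Variables (T : finType) (e : rel T).

Definition induced_paths (S : {set T}) : seq (seq T) :=
  undup [seq P <- flatten [seq seqs_over (enum S) k | k <- iota 1 #|S|] | induced_path e P].

Lemma mem_induced_paths S P :
  (P \in induced_paths S) = [&& P != [::], induced_path e P & all (mem S) P].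
Proof.
have memS Q : all (mem (enum S)) Q = all (mem S) Q by apply: eq_all => x; rewrite /= mem_enum.
rewrite mem_undup mem_filter andbC; apply/andP/and3P => [[/flatten_mapP[k]] | [P0 ip PS]].
  rewrite mem_iota mem_seqs_over memS => /andP[k_gt0 _] /andP[/eqP szP ->] ->.
  by rewrite -size_eq0 szP -lt0n.
split=> //; apply/flatten_mapP; exists (size P); last by rewrite mem_seqs_over eqxx memS.
by rewrite mem_iota lt0n size_eq0 P0 add1n ltnS size_le_card ?(induced_path_uniq ip).
Qed.

Lemma mem_cons_nil_induced_paths (S : {set T}) P :
  induced_path e P -> all (mem S) P -> P \in [::] :: induced_paths S.
Proof.
case: P => [|x P] ipP PS; rewrite inE //; apply/orP; right.
by rewrite mem_induced_paths ipP PS.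
Qed.

Lemma uniq_induced_paths S : uniq (induced_paths S).
Proof. exact: undup_uniq. Qed.

Lemma induced_paths_size_le S P : P \in induced_paths S -> size P <= #|S|.
Proof.
by rewrite mem_induced_paths => /and3P[_ /induced_path_uniq uP PS]; apply: size_le_card.
Qed.

Hypotheses (e_sym : symmetric e) (e_irr : irreflexive e).

Lemma ordered_induced_pathE k (t : k.-tuple T) :
  ordered_induced_path e t = (tval t != [::]) && induced_path e t.
Proof.
rewrite /ordered_induced_path; case: t => -[|x0 s] sz_k /=; have sz := eqP sz_k.
  by have -> : 0 < k = false by rewrite -sz.
have -> : 0 < k by rewrite -sz.
transitivity (induced_path e (x0 :: s)); last by [].
rewrite andTb; apply/andP/idP => [[us /forallP adj] | /(induced_pathP e_sym e_irr x0)[us adj]].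
  apply/(induced_pathP e_sym e_irr x0); split=> // i j; rewrite sz => ilt jlt.
  by have /forallP/(_ (Ordinal jlt))/eqP := adj (Ordinal ilt); rewrite !(tnth_nth x0).
have lt_sz (i : 'I_k) : i < size (x0 :: s) by rewrite sz.
split=> //; apply/forallP=> i; apply/forallP=> j; apply/eqP.
by rewrite !(tnth_nth x0) adj ?lt_sz.
Qed.

Lemma card_ordered_induced_paths k :
  #|[pred t : k.-tuple T | ordered_induced_path e t]| =
  count (fun P => size P == k) (induced_paths [set: T]).
Proof.
rewrite -size_filter cardE -(size_map val); apply/perm_size/uniq_perm.
- by rewrite (map_inj_uniq val_inj) enum_uniq.
- by rewrite filter_uniq ?uniq_induced_paths.
move=> P; rewrite mem_filter mem_induced_paths.
have -> : all (mem [set: T]) P by apply/allP => x; rewrite /= in_setT.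
rewrite andbT; apply/mapP/andP => [[t] | [szP /andP[P0 ip]]].
  by rewrite mem_enum inE ordered_induced_pathE // => ip ->; rewrite size_tuple.
by exists (Tuple szP); rewrite // mem_enum inE ordered_induced_pathE //= P0.
Qed.

Lemma num_ordered_induced_pathsE :
  num_ordered_induced_paths e = size (induced_paths [set: T]).
Proof.
rewrite /num_ordered_induced_paths -cardsT -(sum_count_size (n := #|[set: T]|)).
  by apply: eq_bigr => k _; rewrite card_ordered_induced_paths.
by apply/allP => P; apply: induced_paths_size_le.
Qed.
End InducedPathCount.

Section RelPre.
Variables (A B : finType) (f : A -> B) (r : rel B).

Lemma simple_graph_relpre : simple_graph r -> simple_graph (relpre f r).
Proof. by case=> r_sym r_irr; split=> [x y | x]; [apply: r_sym | apply: r_irr]. Qed.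

Hypothesis f_inj : injective f.

Lemma induced_path_relpre s : induced_path (relpre f r) s = induced_path r (map f s).
Proof. by elim: s => //= x s ->; rewrite mem_map // -map_take -map_drop !all_map. Qed.

Lemma is_cycle_relpre s : is_cycle (relpre f r) s = is_cycle r (map f s).
Proof. by rewrite /is_cycle size_map map_inj_uniq // cycle_map. Qed.
End RelPre.

Section SetsOfVertices.
Variables (T : finType) (e : rel T).

Lemma anticompleteP (A B : {set T}) :
  reflect {in A & B, forall x y, (x != y) && ~~ e x y} (anticomplete e A B).
Proof.
apply: (iffP andP) => [[disj /forall_inP nadj] x y xA yB | nadj]; last split.
- rewrite (forall_inP (nadj x xA)) // andbT.
  by apply: contraFneq (disjointFr disj xA) => ->.
- rewrite disjoint_subset; apply/subsetP => x xA; rewrite inE.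
  by apply: contra (nadj x x xA) _; rewrite eqxx.
- apply/forall_inP => x xA; apply/forall_inP => y yB.
  by case/andP: (nadj x y xA yB).
Qed.

Definition sO_free_in (t : nat) (S : {set T}) : Prop :=
  ~ exists f : 'I_t -> seq T,
      (forall i, is_cycle e (f i) && all (mem S) (f i)) /\
      (forall i j, i != j -> anticomplete e [set x in f i] [set x in f j]).

Lemma sO_free_in_le t t' (S S' : {set T}) :
  t <= t' -> S' \subset S -> sO_free_in t S -> sO_free_in t' S'.
Proof.
move=> le_tt' sub_S'S freeS [f [f_cyc f_anti]]; apply: freeS.
exists (fun i => f (widen_ord le_tt' i)); split=> [i | i j ij].
  have /andP[-> /allP f_S'] := f_cyc (widen_ord le_tt' i).
  by apply/allP => x /f_S' /(subsetP sub_S'S).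
by apply: f_anti; apply: contra ij => /eqP[/val_inj ->].
Qed.

Definition C4s (S : {set T}) : seq (seq T) := [seq X <- seqs_over (enum S) 4 | is_cycle e X].

Lemma mem_C4s S X : (X \in C4s S) = [&& is_cycle e X, size X == 4 & all (mem S) X].
Proof.
rewrite mem_filter mem_seqs_over; congr [&& _, _ & _].
by apply: eq_all => x; rewrite /= mem_enum.
Qed.

Lemma size_C4s S : size (C4s S) <= #|S| ^ 4.
Proof. by rewrite cardE -size_seqs_over size_filter count_size. Qed.
End SetsOfVertices.

Section InducedSubgraph.
Variables (T : finType) (e : rel T) (S : {set T}).
Local Notation eS := (relpre val e : rel {x : T | x \in S}).

Lemma card_induced_subgraph : #|{: {x : T | x \in S}}| = #|S|.
Proof. by rewrite card_sig; apply: eq_card. Qed.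

Lemma sO_free_induced_subgraph t : sO_free_in e t S -> sO_free t eS.
Proof.
move=> freeS [f [f_cyc f_anti]]; apply: freeS; exists (fun i => map val (f i)); split.
  move=> i; rewrite -is_cycle_relpre ?f_cyc; last exact: val_inj.
  by apply/allP => _ /mapP[x _ ->]; apply: valP.
move=> i j /f_anti /anticompleteP nadj; apply/anticompleteP => x' y'.
rewrite !inE => /mapP[x xi ->] /mapP[y yj ->].
by have := nadj x y; rewrite !inE -(inj_eq val_inj); apply.
Qed.

Lemma no_C4_induced_subgraph : C4s e S = [::] -> no_C4 eS.
Proof.
move=> noC4 [X [X_cyc X_4]]; have : map val X \in C4s e S.
  rewrite mem_C4s -is_cycle_relpre ?X_cyc ?size_map ?X_4 /=; last exact: val_inj.
  by apply/allP => _ /mapP[x _ ->]; apply: valP.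
by rewrite noC4.
Qed.

Lemma size_induced_paths_subgraph :
  size (induced_paths e S) <= size (induced_paths eS [set: {x : T | x \in S}]).
Proof.
rewrite -(size_map (map val)); apply: uniq_leq_size; first exact: uniq_induced_paths.
move=> P; rewrite mem_induced_paths => /and3P[P0 ip PS].
pose Q : seq {x : T | x \in S} := pmap insub P.
have PQ : map val Q = P.
  by rewrite (pmap_filter (insubK _)) (eq_filter (isSome_insub _)); apply/all_filterP.
apply/mapP; exists Q; last by rewrite PQ.
rewrite mem_induced_paths induced_path_relpre ?PQ ?ip /=; last exact: val_inj.
apply/andP; split; first by apply: contra_neq P0 => Q0; rewrite -PQ Q0.
by apply/allP => x; rewrite /= in_setT.
Qed.
End InducedSubgraph.

Lemma C4_free_bound_in (s c : nat) :
  (forall (T : finType) (e : rel T), simple_graph e -> sO_free s e -> no_C4 e ->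
      num_ordered_induced_paths e <= #|T| ^ c) ->
  forall (T : finType) (e : rel T) (S : {set T}), simple_graph e ->
    sO_free_in e s S -> C4s e S = [::] -> size (induced_paths e S) <= #|S| ^ c.
Proof.
move=> bound T e S e_simple freeS noC4; rewrite -card_induced_subgraph.
have [eS_sym eS_irr] := simple_graph_relpre (val : {x : T | x \in S} -> T) e_simple.
apply: leq_trans (size_induced_paths_subgraph e S) _.
rewrite -num_ordered_induced_pathsE //; apply: bound.
- exact: simple_graph_relpre.
- exact: sO_free_induced_subgraph.
- exact: no_C4_induced_subgraph.
Qed.

Section Forest.
Variables (T : finType) (e : rel T).
Hypothesis e_sym : symmetric e.

Lemma two_paths_cycle x W V :
  uniq (x :: W) -> uniq (x :: V) -> path e x W -> path e x V ->
  has (mem V) W -> head x W != head x V ->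
  exists2 cy, is_cycle e cy & {subset cy <= x :: W ++ V}.
Proof.
move=> uW uV pW pV hasV hd; case/split_find: hasV uW pW hd => w W1 W2 wV W1V uW pW hd.
case/path.splitP: wV W1V uV pV hd => V1 V2 W1V uV pV hd.
exists (x :: rcons W1 w ++ rev V1); last first.
  move=> u; rewrite !(inE, mem_cat, mem_rcons, mem_rev).
  by case/or3P=> [-> | /orP[] -> | ->]; rewrite ?orbT.
rewrite /is_cycle; apply/and3P; split.
- move: hd; rewrite /= size_cat size_rcons size_rev.
  by case: (W1) (V1) => [|? ?] [|? ?]; rewrite //= eqxx.
- move: uW uV; rewrite /= !mem_cat !cat_uniq !negb_or => /and3P[/andP[xW1 _] uW1 _].
  case/and3P=> /andP[xV1 _] uV1 _; rewrite mem_rev xW1 rev_uniq /=.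
  move: xV1 uV1; rewrite mem_rcons inE negb_or rcons_uniq => /andP[_ ->] /andP[wV1 ->].
  rewrite uW1 has_rev andbT; apply/hasPn => u uV1; rewrite mem_rcons inE negb_or.
  apply/andP; split; first by apply: contraNneq wV1 => <-.
  apply: contra W1V => uW1'; apply/hasP; exists u => //.
  by rewrite inE mem_cat mem_rcons inE uV1 orbT.
rewrite /= rcons_cat cat_path last_rcons -rev_cons; apply/andP; split.
  by move: pW; rewrite cat_path => /andP[].
have := rev_path e x (rcons V1 w); rewrite last_rcons belast_rcons => ->.
have /eq_path-> : (fun z => e^~ z) =2 e by move=> a b; apply: e_sym.
by move: pV; rewrite cat_path => /andP[].
Qed.

Variable S : {set T}.
Hypothesis S_acyclic : sO_free_in e 1 S.

Lemma acyclic_path_unique x P Q :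
  uniq (x :: P) -> uniq (x :: Q) -> path e x P -> path e x Q ->
  all (mem S) (x :: P) -> all (mem S) (x :: Q) -> last x P = last x Q -> P = Q.
Proof.
elim: P x Q => [|y P IH] x [|z Q] // uP uQ pP pQ SP SQ eq_last.
- by case/andP: uQ => /negP[]; move: eq_last => /= ->; apply: mem_last.
- by case/andP: uP => /negP[]; move: eq_last => /= <-; apply: mem_last.
have [eq_yz | yz] := eqVneq y z.
  subst z; congr (_ :: _); move: uP uQ pP pQ SP SQ.
  move=> /andP[_ uP] /andP[_ uQ] /andP[_ pP] /andP[_ pQ] /andP[_ SP] /andP[_ SQ].
  exact: (IH y Q uP uQ pP pQ SP SQ eq_last).
exfalso; apply: S_acyclic.
have [|cy cy_cyc cy_sub] := two_paths_cycle uP uQ pP pQ _ yz.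
  by apply/hasP; exists (last y P); rewrite ?mem_last //; move: eq_last => /= ->; apply: mem_last.
exists (fun _ => cy); split=> [_ | i j]; last by rewrite !ord1 eqxx.
rewrite cy_cyc; apply/allP => u /cy_sub; rewrite -cat_cons mem_cat.
by case/orP=> [/(allP SP) | u_zQ] //; apply: (allP SQ); rewrite inE u_zQ orbT.
Qed.

Lemma size_induced_paths_acyclic : size (induced_paths e S) <= #|S| ^ 2.
Proof.
pose ends (P : seq T) := if P is x :: P' then Some (x, last x P') else None.
have -> : #|S| ^ 2 = size [seq Some (a, b) | a <- enum S, b <- enum S].
  by rewrite size_allpairs -cardE mulnn.
rewrite -(size_map ends); apply: uniq_leq_size.
  rewrite map_inj_in_uniq ?uniq_induced_paths // => -[|x P] [|y Q];
    rewrite !mem_induced_paths // => /and3P[_ ipP SP] /and3P[_ ipQ SQ] /= [xy].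
  subst y; move/(acyclic_path_unique (induced_path_uniq ipP) (induced_path_uniq ipQ)) => -> //.
  - exact: induced_path_path ipP.
  - exact: induced_path_path ipQ.
move=> k /mapP[[|x P]]; rewrite mem_induced_paths // => /and3P[_ _ SP] ->.
by apply: allpairs_f; rewrite mem_enum; apply: (allP SP); rewrite ?mem_head ?mem_last.
Qed.
End Forest.

Lemma longest_suffix (A : Type) (good : pred (seq A)) (P : seq A) : good [::] ->
  exists pre B, [/\ P = pre ++ B, good B & forall pre' v, pre = rcons pre' v -> ~~ good (v :: B)].
Proof.
have nil_rcons pre' (v : A) : [::] <> rcons pre' v by case: pre'.
move=> good0; elim: P => [|x P [pre [B [-> gB maxB]]]].
  by exists [::], [::]; split=> // pre' v /nil_rcons.
have [gP | ngP] := boolP (good (x :: pre ++ B)).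
  by exists [::], (x :: pre ++ B); split=> // pre' v /nil_rcons.
exists (x :: pre), B; split=> // pre' v; case/lastP: pre maxB ngP => [|pre w] maxB ngP.
  by case: pre' => [[<-] | ? ? [_ /nil_rcons]].
by rewrite -rcons_cons => /rcons_inj[_ <-]; apply: (maxB pre).
Qed.

Lemma size_allpairs_dep_leq (A : eqType) (B R : Type) (f : A -> B -> R) s t k :
  {in s, forall x, size (t x) <= k} -> size [seq f x y | x <- s, y <- t x] <= size s * k.
Proof.
rewrite size_allpairs_dep; elim: s => //= x s IH tk.
by rewrite mulSn leq_add ?tk ?mem_head // IH // => y ys; rewrite tk // inE ys orbT.
Qed.

Lemma card_setD_lt (T : finType) (S Y : {set T}) x : x \in S -> x \in Y -> #|S :\: Y| < #|S|.
Proof.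
by move=> xS xY; apply/proper_card/properP; split; [apply: subsetDl | exists x; rewrite // inE xY].
Qed.

Section ClosedNbhd.
Variables (T : finType) (e : rel T).

Definition closed_nbhd (X : seq T) : {set T} := [set y | has (fun x => (x == y) || e x y) X].

Lemma mem_closed_nbhd X x : x \in X -> x \in closed_nbhd X.
Proof. by move=> xX; rewrite inE; apply/hasP; exists x; rewrite ?eqxx. Qed.

Lemma notin_closed_nbhd X y : (y \notin closed_nbhd X) = all (fun x => (x != y) && ~~ e x y) X.
Proof. by rewrite inE -all_predC; apply: eq_all => x; rewrite /= negb_or. Qed.

Hypothesis e_sym : symmetric e.

Lemma avoid_closed_nbhdC X Y :
  all (fun y => y \notin closed_nbhd X) Y = all (fun x => x \notin closed_nbhd Y) X.
Proof.
under eq_all do rewrite notin_closed_nbhd; under [RHS]eq_all do rewrite notin_closed_nbhd.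
by rewrite -[LHS]/(allrel _ Y X) allrelC; apply: eq_allrel => x y; rewrite eq_sym e_sym.
Qed.

Lemma anticompleteC (A B : {set T}) : anticomplete e A B = anticomplete e B A.
Proof.
by apply/anticompleteP/anticompleteP => nadj x y xA yB; rewrite eq_sym e_sym nadj.
Qed.

Lemma sO_free_in_del t (S : {set T}) X : is_cycle e X -> all (mem S) X ->
  sO_free_in e t.+1 S -> sO_free_in e t (S :\: closed_nbhd X).
Proof.
move=> X_cyc XS freeS [f [f_cyc f_anti]]; apply: freeS.
have f_nbhd i : all (fun y => y \notin closed_nbhd X) (f i).
  by case/andP: (f_cyc i) => _ /allP fS; apply/allP => y /fS /setDP[].
exists (fun i => if unlift ord_max i is Some j then f j else X); split=> [i | i j].
  case: unliftP => [j _ | _]; rewrite ?X_cyc ?XS //.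
  by case/andP: (f_cyc j) => -> /allP fS; apply/allP => y /fS /setDP[].
have anti_X k : anticomplete e [set x in X] [set y in f k].
  apply/anticompleteP => x y; rewrite !inE => xX /(allP (f_nbhd k)).
  by rewrite notin_closed_nbhd => /allP/(_ x xX).
case: unliftP => [i' -> | ->]; case: unliftP => [j' -> | ->] ij.
- by apply: f_anti; apply: contraNneq ij => ->.
- by rewrite anticompleteC.
- exact: anti_X.
- by rewrite eqxx in ij.
Qed.
End ClosedNbhd.

Lemma expn_pred_add n k : 0 < n -> (n - 1) ^ k.+1 + n ^ k <= n ^ k.+1.
Proof.
move=> n_gt0; have : (n - 1) ^ k <= n ^ k by case: k => // k; rewrite leq_exp2r // leq_subr.
rewrite !expnS; nia.
Qed.

Lemma candidates_count_arith n a c : 2 <= n -> 2 <= c -> 0 < a ->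
  n ^ 4 * ((1 + (n - 1) ^ a) * (1 + n * (1 + n * (1 + (n - 1) ^ c)))) <= n ^ (a + c + 6).
Proof.
move=> n_ge2 c_ge2 a_gt0; have -> : a + c + 6 = 4 + (a + c.+2) by lia.
rewrite !expnD leq_mul2l; apply/orP; right; apply: leq_mul.
  by rewrite add1n ltn_exp2r //; lia.
case: c c_ge2 => // c c_ge1.
have := expn_pred_add c (ltnW n_ge2); have : n ^ 1 <= n ^ c by rewrite leq_exp2l.
rewrite expn1 !expnS; nia.
Qed.

Section Step.
Variables (T : finType) (e : rel T) (S : {set T}) (a c : nat).
Hypotheses (e_sym : symmetric e) (c_ge2 : 1 < c) (a_gt0 : 0 < a).
Local Notation n := #|S|.
Local Notation N := (closed_nbhd e).
Local Notation paths := (induced_paths e).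

Hypothesis C4_free_bound :
  forall Y : {set T}, Y \subset S -> C4s e Y = [::] -> size (paths Y) <= #|Y| ^ c.
Hypothesis deletion_bound :
  forall X, X \in C4s e S -> size (paths (S :\: N X)) <= (n - 1) ^ a.

Definition prefixes v B : seq (seq T) :=
  [::] :: [seq rcons A u | u <- enum S, A <- [::] :: paths (S :\: N (v :: B))].

Definition extensions B : seq (seq T) :=
  [seq A ++ v :: B | v <- [seq v <- enum S | C4s e (S :\: N (v :: B)) == [::]],
                     A <- prefixes v B].

Definition candidates X : seq (seq T) :=
  [seq P | B <- [::] :: paths (S :\: N X), P <- B :: extensions B].

Definition all_candidates : seq (seq T) := [seq P | X <- C4s e S, P <- candidates X].

Lemma size_prefixes v B : v \in S -> C4s e (S :\: N (v :: B)) = [::] ->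
  size (prefixes v B) <= 1 + n * (1 + (n - 1) ^ c).
Proof.
move=> vS noC4; rewrite /prefixes; set L := (X in _ :: X).
rewrite /= {}/L size_allpairs -cardE add1n ltnS leq_mul2l ltnS.
apply/orP; right; apply: leq_trans (C4_free_bound (subsetDl _ _) noC4) _.
rewrite leq_exp2r ?(ltnW c_ge2) //; have lt := card_setD_lt vS (mem_closed_nbhd e (mem_head v B)).
by rewrite -ltnS subn1 prednK // (leq_ltn_trans _ lt).
Qed.

Lemma size_extensions B : size (extensions B) <= n * (1 + n * (1 + (n - 1) ^ c)).
Proof.
apply: leq_trans (size_allpairs_dep_leq _ _) _ => [v | ].
  by rewrite mem_filter mem_enum => /andP[/eqP noC4 vS]; apply: size_prefixes.
by rewrite leq_mul2r size_filter cardE count_size orbT.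
Qed.

Lemma size_candidates X : X \in C4s e S ->
  size (candidates X) <= (1 + (n - 1) ^ a) * (1 + n * (1 + n * (1 + (n - 1) ^ c))).
Proof.
move=> XC; pose k := 1 + n * (1 + n * (1 + (n - 1) ^ c)).
apply: leq_trans (size_allpairs_dep_leq (k := k) _ _) _.
  by move=> B _; rewrite /= /k add1n ltnS; apply: size_extensions.
by rewrite /k leq_mul2r /= add1n ltnS deletion_bound ?orbT.
Qed.

Lemma size_all_candidates :
  size all_candidates <= n ^ 4 * ((1 + (n - 1) ^ a) * (1 + n * (1 + n * (1 + (n - 1) ^ c)))).
Proof.
apply: leq_trans (size_allpairs_dep_leq _ _) _ => [X XC | ]; first exact: size_candidates.
by rewrite leq_mul2r size_C4s orbT.
Qed.

Lemma mem_prefixes A v B :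
  induced_path e (A ++ v :: B) -> all (mem S) A -> A \in prefixes v B.
Proof.
case/lastP: A => [|A u] ipP AS; first exact: mem_head.
rewrite cat_rcons in ipP; rewrite inE; apply/orP; right; apply/allpairsP; exists (u, A).
split=> //=; first by rewrite mem_enum; apply: (allP AS); rewrite mem_rcons mem_head.
apply: mem_cons_nil_induced_paths; first exact: induced_path_catl ipP.
apply/allP => x xA; apply/setDP; split; first by apply: (allP AS); rewrite mem_rcons inE xA orbT.
rewrite notin_closed_nbhd; apply/allP => y yvB; rewrite eq_sym e_sym.
exact: induced_path_cat_nadj ipP xA yvB.
Qed.

Lemma C4s_setD_closed_nbhd Q :
  ~~ has (fun X => all (fun y => y \notin N X) Q) (C4s e S) -> C4s e (S :\: N Q) = [::].
Proof.
move=> noX; case E: (C4s e (S :\: N Q)) => [//|Y L].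
have : Y \in C4s e (S :\: N Q) by rewrite E mem_head.
rewrite mem_C4s => /and3P[Ycyc Y4 /allP YSQ]; case/negP: noX; apply/hasP; exists Y.
  by rewrite mem_C4s Ycyc Y4; apply/allP => y /YSQ /setDP[].
by rewrite -avoid_closed_nbhdC //; apply/allP => y /YSQ /setDP[].
Qed.

Lemma induced_paths_sub_candidates : C4s e S != [::] -> {subset paths S <= all_candidates}.
Proof.
move=> hasC4 P; rewrite mem_induced_paths => /and3P[_ ipP PS].
pose avoids_C4_nbhd Q := has (fun X => all (fun y => y \notin N X) Q) (C4s e S).
have [|pre [B [EP /hasP[X XC BX] maxB]]] := longest_suffix (good := avoids_C4_nbhd) P.
  by rewrite /avoids_C4_nbhd; case: (C4s e S) hasC4.
apply/allpairsPdep; exists X, P; split=> //; apply/allpairsPdep; exists B, P; split=> //.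
  apply: mem_cons_nil_induced_paths; first by apply: (@induced_path_catr _ _ pre); rewrite -EP.
  apply/allP => y yB; apply/setDP; split; last exact: (allP BX).
  by apply: (allP PS); rewrite EP mem_cat yB orbT.
case/lastP: pre EP maxB => [-> _ | A v EP maxB]; first exact: mem_head.
have AvS : all (mem S) (rcons A v) by apply/allP => x xAv; apply: (allP PS); rewrite EP mem_cat xAv.
rewrite inE EP cat_rcons; apply/orP; right; apply/allpairsPdep; exists v, A; split=> //.
  rewrite mem_filter mem_enum (C4s_setD_closed_nbhd (maxB A v _)) //=.
  by apply: (allP AvS); rewrite mem_rcons mem_head.
apply: mem_prefixes; first by rewrite -cat_rcons -EP.
by apply/allP => x xA; apply: (allP AvS); rewrite mem_rcons inE xA orbT.
Qed.

Lemma size_induced_paths_step : C4s e S != [::] -> size (paths S) <= n ^ (a + c + 6).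
Proof.
move=> hasC4; have [X XC] : exists X, X \in C4s e S.
  by case: (C4s e S) hasC4 => // X L _; exists X; apply: mem_head.
have n_ge4 : 4 <= n.
  by move: XC; rewrite mem_C4s => /and3P[/and3P[_ uX _] /eqP <-]; apply: size_le_card.
apply: leq_trans (uniq_leq_size (uniq_induced_paths _ _) (induced_paths_sub_candidates hasC4)) _.
exact: leq_trans size_all_candidates (candidates_count_arith (leq_trans _ n_ge4) c_ge2 a_gt0).
Qed.
End Step.

Section Induction.
Variables (T : finType) (e : rel T) (s c : nat).
Hypotheses (e_sym : symmetric e) (c_ge2 : 1 < c).
Hypothesis C4_free_bound : forall S : {set T},
  sO_free_in e s S -> C4s e S = [::] -> size (induced_paths e S) <= #|S| ^ c.

Lemma size_induced_paths_sO_free t (S : {set T}) : t < s -> sO_free_in e t.+1 S ->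
  size (induced_paths e S) <= #|S| ^ (2 + t * (c + 6)).
Proof.
elim: t S => [|t IH] S lt_ts freeS; first by rewrite addn0; apply: size_induced_paths_acyclic.
have -> : 2 + t.+1 * (c + 6) = 2 + t * (c + 6) + c + 6 by rewrite mulSn; lia.
have [noC4 | hasC4] := eqVneq (C4s e S) [::].
  apply: leq_trans (C4_free_bound (sO_free_in_le lt_ts (subxx S) freeS) noC4) _.
  have [-> | n_gt0] := posnP #|S|; first by rewrite exp0n ?(ltnW c_ge2).
  by apply: leq_pexp2l => //; lia.
apply: size_induced_paths_step hasC4 => // [Y YS | X].
  by apply: C4_free_bound; apply: sO_free_in_le lt_ts YS freeS.
rewrite mem_C4s => /and3P[X_cyc /eqP X4 XS].
apply: leq_trans (IH _ (ltnW lt_ts) (sO_free_in_del e_sym X_cyc XS freeS)) _.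
have [x xX] : exists x, x \in X by case: X X4 {X_cyc XS} => // x X _; exists x; apply: mem_head.
have lt := card_setD_lt (allP XS x xX) (mem_closed_nbhd e xX).
by rewrite leq_exp2r // -ltnS subn1 prednK // (leq_ltn_trans _ lt).
Qed.
End Induction.

(* Applied to the two-vertex graph, which has no cycle and four ordered induced
   paths, the hypothesis forces c >= 2. *)
Lemma exponent_ge2 (s c : nat) : 0 < s ->
  (forall (T : finType) (e : rel T), simple_graph e -> sO_free s e -> no_C4 e ->
      num_ordered_induced_paths e <= #|T| ^ c) -> 1 < c.
Proof.
move=> s_gt0 bound; pose K2 : rel bool := fun a b => a != b.
have K2_sym : symmetric K2 by move=> a b; rewrite /K2 eq_sym.
have K2_irr : irreflexive K2 by move=> a; rewrite /K2 eqxx.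
have K2_acyclic cy : ~~ is_cycle K2 cy.
  apply/negP => /and3P[size_cy /card_uniqP card_cy _].
  by have := max_card (mem cy); rewrite card_cy card_bool; lia.
have K2_sO : sO_free s K2.
  by case=> f [f_cyc _]; have := K2_acyclic (f (Ordinal s_gt0)); rewrite f_cyc.
have K2_noC4 : no_C4 K2 by case=> cy [cy_cyc _]; have := K2_acyclic cy; rewrite cy_cyc.
have paths4 : 4 <= num_ordered_induced_paths K2.
  rewrite num_ordered_induced_pathsE //.
  apply: (@uniq_leq_size _ [:: [:: true]; [:: false]; [:: true; false]; [:: false; true]]) => // P.
  by rewrite !inE => /or4P[] /eqP ->; rewrite mem_induced_paths /= !in_setT.
have := leq_trans paths4 (bound _ K2 (conj K2_sym K2_irr) K2_sO K2_noC4).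
by rewrite card_bool; case: c {bound} => [|[|c]].
Qed.

Lemma sO_free_in_setT (T : finType) (e : rel T) s : sO_free s e -> sO_free_in e s [set: T].
Proof.
by move=> freeT [f [f_cyc f_anti]]; apply: freeT; exists f; split=> // i; case/andP: (f_cyc i).
Qed.

Unset Implicit Arguments.

Theorem mainTheorem4 (s c : nat) :
  1 <= s -> 1 <= c ->
  (forall (T : finType) (e : rel T),
      simple_graph e -> sO_free s e -> no_C4 e ->
      num_ordered_induced_paths e <= #|T| ^ c) ->
  forall (T : finType) (e : rel T),
    simple_graph e -> sO_free s e ->
    num_ordered_induced_paths e <= #|T| ^ (2 + (s - 1) * (c + 6)).
Proof.
move=> s_gt0 _ bound T e e_simple freeT; have [e_sym e_irr] := e_simple.
rewrite num_ordered_induced_pathsE // -cardsT.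
apply: (size_induced_paths_sO_free e_sym (exponent_ge2 s_gt0 bound)).
- by move=> S; apply: (C4_free_bound_in bound e_simple).
- by rewrite subn1 ltn_predL.
- by rewrite subn1 prednK //; apply: sO_free_in_setT.
Qed.
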